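(* The coefficient truncation map $Q:\sum_{x}a_x\lambda(x)\mapsto\sum_{x\in K}a_x\lambda(x)$, defined on finite linear combinations of $\lambda(x)$, $x\in F_\infty$ (i.e. the orthogonal projection onto $\ell_2(K)$), satisfies $\|Q_n(T)\|\le 2\|T\|$ for all $n$ and all $T\in M_n(\mathrm{span}\{\lambda(x):x\in F_\infty\})$. Consequently $Q$ extends to a completely bounded projection of cb-norm at most $2$ from $C^*_\lambda(F_\infty)$ onto $C^*_\lambda(K)$.
   Context: Let $F_\infty$ be the free group with free generators split into two infinite families $\alpha_1,\alpha_2,\dots$ and $e_1,e_2,\dots$. Let $F_\alpha$ be the subgroup generated by the $\alpha_i$, and $K=\bigcup_{j\ge1}e_jF_\alpha\subseteq F_\infty$. On $\ell_2(F_\infty)$ (orthonormal basis $\{\delta_x\}$) let $\lambda(x)\delta_y=\delta_{xy}$; $C^*_\lambda(F_\infty)$ is the norm closure of $\mathrm{span}\{\lambda(x)\}$ in $B(\ell_2(F_\infty))$, and $C^*_\lambda(K)$ is the norm closure of $\mathrm{span}\{\lambda(x):x\in K\}$ there. $Q_n$ denotes $Q$ applied entrywise to $n\times n$ matrices, with $M_n(B(H))=B(H^n)$. *)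

(* Free group F_oo on generators alpha_i, e_j (i, j : nat),
   modelled by reduced words; finitely supported elements of the group algebra
   and of l2(F_oo)^n are modelled as finite formal sums (lists of
   coefficient/group-element pairs). *)
From HB Require Import structures.
From mathcomp Require Import all_boot all_order all_algebra.
From mathcomp Require Import complex.
From mathcomp Require Import reals.
Set Implicit Arguments. Unset Strict Implicit. Unset Printing Implicit Defensive.
Import Order.TTheory GRing.Theory Num.Theory.
Local Open Scope ring_scope.

(* generators: inl i = alpha_i, inr j = e_j *)
Definition gen := (nat + nat)%type.
(* a letter: a generator together with an "inverse" flag (true = inverse) *)
Definition letter := (gen * bool)%type.

Definition linv (l : letter) : letter := (l.1, ~~ l.2).

(* free reduction: push letters one by one on a stack (stored reversed) *)
Definition push (st : seq letter) (l : letter) : seq letter :=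
  match st with
  | m :: st' => if m == linv l then st' else l :: m :: st'
  | [::] => [:: l]
  end.
Definition reduce (w : seq letter) : seq letter := rev (foldl push [::] w).

Fixpoint reducedb (w : seq letter) : bool :=
  match w with
  | l :: ((m :: _) as w') => (m != linv l) && reducedb w'
  | _ => true
  end.

Definition Finf := {w : seq letter | reducedb w}.
HB.instance Definition _ := [isSub for (@sval _ (fun w => reducedb w))].
HB.instance Definition _ := [Countable of Finf by <:].

Definition Fone : Finf := exist _ [::] isT.

(* product in F_oo: free reduction of the concatenation (the result of
   [reduce] is always reduced, so the default [Fone] is never used) *)
Definition fmul (x y : Finf) : Finf := insubd Fone (reduce (val x ++ val y)).

Definition isAlpha (l : letter) : bool := if l.1 is inl _ then true else false.

(* K = union_j e_j F_alpha : reduced words  e_j . (reduced word in the alpha's) *)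
Definition inK (x : Finf) : bool :=
  match val x with
  | (inr _, false) :: rest => all isAlpha rest
  | _ => false
  end.

Section Ops.
Variable R : realType.
Local Notation C := R[i].

Definition abs2 (z : C) : R := let: Complex a b := z in a ^+ 2 + b ^+ 2.

(* finite formal sum  sum_{(c,x) in s} c * (lambda(x) or delta_x) *)
Definition fsum := seq (C * Finf).

Definition coef (s : fsum) (g : Finf) : C := \sum_(p <- s | p.2 == g) p.1.

Definition norm2 (s : fsum) : R :=
  \sum_(g <- undup (map snd s)) abs2 (coef s g).

(* (sum c_x lambda(x)) applied to (sum d_y delta_y) = sum c_x d_y delta_{xy} *)
Definition act (a v : fsum) : fsum :=
  [seq (p.1 * q.1, fmul p.2 q.2) | p <- a, q <- v].

(* vectors in l2(F_oo)^n with finite support, and n x n matrices over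
   span{lambda(x)} *)
Definition vnorm2 (n : nat) (v : 'I_n -> fsum) : R := \sum_(i < n) norm2 (v i).

Definition mxact (n : nat) (T : 'I_n -> 'I_n -> fsum) (v : 'I_n -> fsum)
  : 'I_n -> fsum :=
  fun i => flatten [seq act (T i j) (v j) | j <- enum 'I_n].

Definition Qtr (s : fsum) : fsum := [seq p <- s | inK p.2].
Definition Qn (n : nat) (T : 'I_n -> 'I_n -> fsum) : 'I_n -> 'I_n -> fsum :=
  fun i j => Qtr (T i j).

(* ||T|| <= c  on  l2(F_oo)^n  (tested on the dense subspace of finitely
   supported vectors, which suffices since T is bounded) *)
Definition opnorm_le (n : nat) (T : 'I_n -> 'I_n -> fsum) (c : R) : Prop :=
  forall v : 'I_n -> fsum, vnorm2 (mxact T v) <= c ^+ 2 * vnorm2 v.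
End Ops.

From HB Require Import structures.
From mathcomp Require Import all_boot all_order all_algebra.
From mathcomp Require Import complex.
From mathcomp Require Import reals.
From mathcomp Require Import ring lra.
Set Implicit Arguments. Unset Strict Implicit. Unset Printing Implicit Defensive.
Import Order.TTheory GRing.Theory Num.Theory.

(* For reduced words g, y with x = g y, whether g lies in K = U_j e_j F_alpha
   can be read off from x and y alone: either x = e_j x' where x' and y agree
   once their leading alpha-letters are stripped, or y with its leading
   alpha-letters stripped is e_j^-1 x; the two cases exclude each other.
   Since the (x, y) entry of Q_n(T) is 1_K(x y^-1) T(x y^-1), Q_n(T) is the
   sum of two Schur multipliers of the form 1[a(x) = b(y)] applied to T.  Each
   of these is a block-diagonal compression sum_k P_{a = k} T P_{b = k} by
   mutually orthogonal projections, hence has norm at most ||T||. *)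

(** * Reduced words *)

Lemma catIs (T : Type) : left_injective (@cat T).
Proof.
move=> w s t E; have Est : size s = size t.
  by move: (congr1 size E); rewrite !size_cat => /addIn.
by move/(congr1 (take (size s))): E; rewrite take_size_cat // Est take_size_cat.
Qed.

Definition nocancel (l m : letter) : bool := m != linv l.

Lemma linvK : involutive linv.
Proof. by case=> a b; rewrite /linv /= negbK. Qed.

Lemma nocancel_sym : symmetric nocancel.
Proof. by move=> l m; rewrite /nocancel eq_sym (can2_eq linvK linvK). Qed.

Lemma reducedbE (w : seq letter) : reducedb w = sorted nocancel w.
Proof.
elim: w => [|l [|m w] IH] //.
by rewrite [LHS]/= -/(reducedb (m :: w)) IH.
Qed.

Definition winv (s : seq letter) : seq letter := rev (map linv s).

Lemma winv_cat s t : winv (s ++ t) = winv t ++ winv s.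
Proof. by rewrite /winv map_cat rev_cat. Qed.

Lemma winvK : involutive winv.
Proof. by move=> s; rewrite /winv map_rev revK -map_comp (eq_map linvK) map_id. Qed.

Lemma winv_cons l s : winv (l :: s) = winv s ++ [:: linv l].
Proof. by rewrite /winv /= rev_cons cats1. Qed.

Lemma all_isAlpha_winv s : all isAlpha (winv s) = all isAlpha s.
Proof. by rewrite /winv all_rev all_map; apply: eq_all => -[[]]. Qed.

Lemma sorted_cancel p s q :
  s != [::] -> sorted nocancel (p ++ s ++ winv s ++ q) = false.
Proof.
case/lastP: s => [//|s l] _; apply/negP.
rewrite -cats1 winv_cat /= -!catA /= catA => /cat_sorted2 [_] /=.
by rewrite /nocancel eqxx.
Qed.

Lemma foldl_push_sorted st w :
  sorted nocancel (rev st ++ w) -> foldl push st w = rev w ++ st.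
Proof.
elim: w st => [|l w IH] st //= Hs.
have -> : push st l = l :: st.
  case: st Hs => [|h st] //=; rewrite rev_cons cat_rcons => /cat_sorted2 [_] /=.
  by case/andP; rewrite nocancel_sym /nocancel => /negbTE ->.
by rewrite IH ?rev_cons ?cat_rcons.
Qed.

Lemma foldl_push_cancel g y : sorted nocancel g -> sorted nocancel y ->
  exists u m w, [/\ g = u ++ m, y = winv m ++ w,
    foldl push (rev g) y = rev (u ++ w) & sorted nocancel (u ++ w)].
Proof.
elim: y g => [|l y IH] g Hg Hy; first by exists g, [::], [::]; rewrite !cats0.
have Hy' : sorted nocancel y := path_sorted Hy.
case/lastP: g Hg => [|g h] Hg.
  by exists [::], [::], (l :: y); rewrite /= foldl_push_sorted ?rev_cons ?cats1.
rewrite rev_rcons /=; case: eqP => [Eh|Nh].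
  have Hg' : sorted nocancel g by move: Hg; rewrite -cats1 => /cat_sorted2 [].
  have [u [m [w [-> -> E S]]]] := IH g Hg' Hy'.
  by exists u, (m ++ [:: h]), w; rewrite catA cats1 winv_cat Eh winv_cons linvK.
have Hgy : sorted nocancel (rcons g h ++ l :: y).
  have hl : nocancel h l by rewrite nocancel_sym; apply/eqP.
  rewrite sorted_cat_cons; apply/andP; split => //.
  by case: g Hg => [|a g] /=; rewrite ?andbT // !rcons_path last_rcons hl => ->.
exists (rcons g h), [::], (l :: y); rewrite cats0; split => //.
rewrite foldl_push_sorted; first by rewrite rev_cat rev_rcons rev_cons cat_rcons.
by rewrite !rev_cons revK cat_rcons.
Qed.

Lemma reduce_cat g y : sorted nocancel g -> sorted nocancel y ->
  exists u m w, [/\ g = u ++ m, y = winv m ++ w,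
    reduce (g ++ y) = u ++ w & sorted nocancel (u ++ w)].
Proof.
move=> Hg Hy; have [u [m [w [Eg Ey E S]]]] := foldl_push_cancel Hg Hy.
exists u, m, w; split => //.
by rewrite /reduce foldl_cat (foldl_push_sorted (st := [::])) ?cats0 // E revK.
Qed.

Lemma sorted_val (x : Finf) : sorted nocancel (val x).
Proof. by rewrite -reducedbE; apply: valP. Qed.

Lemma fmul_val (g y : Finf) : val (fmul g y) = reduce (val g ++ val y).
Proof.
have [u [m [w [_ _ E S]]]] := reduce_cat (sorted_val g) (sorted_val y).
by rewrite /fmul insubdK // -topredE /= E reducedbE.
Qed.

Fixpoint strip (s : seq letter) : seq letter :=
  if s is l :: s' then (if isAlpha l then strip s' else s) else [::].

Lemma strip_cat s t :
  strip (s ++ t) = if all isAlpha s then strip t else strip s ++ t.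
Proof. by elim: s => [|l s IH] //=; case: (isAlpha l). Qed.

Lemma size_strip s : size (strip s) <= size s.
Proof. by elim: s => [|l s IH] //=; case: (isAlpha l) => //; apply: leqW. Qed.

Lemma strip_eq_nil s : (strip s == [::]) = all isAlpha s.
Proof. by elim: s => [|l s IH] //=; case: (isAlpha l). Qed.

Lemma strip_split s : exists2 a, all isAlpha a & s = a ++ strip s.
Proof.
elim: s => [|l s [a Ha E]]; first by exists [::].
rewrite /=; case Hl: (isAlpha l); last by exists [::].
by exists (l :: a); rewrite /= ?Hl -?E.
Qed.

Lemma size_strip_cat s t : ~~ all isAlpha s -> size t < size (strip (s ++ t)).
Proof.
move=> Hs; rewrite strip_cat (negbTE Hs); move: Hs; rewrite -strip_eq_nil.
by case: (strip s) => //= l r _; rewrite size_cat ltnS leq_addl.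
Qed.

Lemma strip_catr_eq s t w :
  strip (s ++ w) = strip (t ++ w) -> strip s = strip t.
Proof.
have longer u : ~~ all isAlpha u -> strip w <> strip u ++ w.
  move=> Hu E; have := size_strip w; rewrite E size_cat -[leqRHS]add0n.
  by rewrite leq_add2r leqn0 size_eq0 strip_eq_nil (negbTE Hu).
rewrite !strip_cat; case Hs: (all isAlpha s); case Ht: (all isAlpha t).
- by move: Hs Ht; rewrite -!strip_eq_nil => /eqP -> /eqP ->.
- by move=> E; case: (longer t (negbT Ht) E).
- by move=> E; case: (longer s (negbT Hs) (esym E)).
- exact: catIs.
Qed.

(** * Reading off membership in K from a product *)

Definition inKw (x : seq letter) : bool :=
  match x with (inr _, false) :: rest => all isAlpha rest | _ => false end.

Definition keyed (T : Type) (K : eqType) (a b : T -> option K) (x y : T) :=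
  if a x is Some k then b y == Some k else false.

Definition tail_key (x : seq letter) : option (seq letter) :=
  if x is (inr _, false) :: x' then Some (strip x') else None.

Definition strip_key (y : seq letter) : option (seq letter) := Some (strip y).

Definition einv_key (y : seq letter) : option (seq letter) :=
  if strip y is (inr _, true) :: w then Some w else None.

Lemma keyed_disjoint x y :
  ~~ (keyed tail_key strip_key x y && keyed Some einv_key x y).
Proof.
rewrite /keyed /einv_key; case: x => [|[[i|j] [|]] x'] //=.
case E: (strip y) => [|[[i|k] [|]] w] //; rewrite ?andbF //.
apply/negP => /andP [/eqP [E1] /eqP [E2]].
by have := size_strip x'; rewrite -E1 E E2 /= ltnNge ltnW.
Qed.

Lemma keyed_of_inKw u m w : inKw (u ++ m) ->
  keyed tail_key strip_key (u ++ w) (winv m ++ w) ||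
  keyed Some einv_key (u ++ w) (winv m ++ w).
Proof.
case: u => [|[[i|j] [|]] u'] //=.
  case: m => [|[[i|j] [|]] a] //= Ha; apply/orP; right.
  by rewrite /keyed /einv_key winv_cons -catA strip_cat all_isAlpha_winv Ha.
rewrite all_cat => /andP [Hu Hm]; apply/orP; left.
by rewrite /keyed /strip_key /= !strip_cat Hu all_isAlpha_winv Hm.
Qed.

Section KeysOfReducedProduct.

Variables u m w : seq letter.
Hypothesis reduced_um : sorted nocancel (u ++ m).

Lemma inKw_of_keyed_tail :
  keyed tail_key strip_key (u ++ w) (winv m ++ w) -> inKw (u ++ m).
Proof.
case: u reduced_um => [|[[i|j] [|]] u'] Hum //=.
  case: w => [|[[i|j] [|]] x'] //= /eqP [E].
  have := @size_strip_cat (rcons (winv m) (inr j, false)) x'.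
  by rewrite all_rcons cat_rcons E ltnNge size_strip => /(_ isT).
rewrite /keyed /= => /eqP [/strip_catr_eq E].
case Hu: (all isAlpha u').
  move: E; rewrite all_cat Hu -all_isAlpha_winv -strip_eq_nil => ->.
  by rewrite strip_eq_nil.
have [a1 _ E1] := strip_split u'; have [a2 _ E2] := strip_split (winv m).
have Em : m = winv (strip u') ++ winv a2 by rewrite -winv_cat -E -E2 winvK.
have Hs : strip u' != [::] by rewrite strip_eq_nil Hu.
move: Hum; rewrite Em; move: (strip u') Hs E1 => s Hs ->.
by rewrite -cat_cons -!catA sorted_cancel.
Qed.

Lemma inKw_of_keyed_einv :
  keyed Some einv_key (u ++ w) (winv m ++ w) -> inKw (u ++ m).
Proof.
rewrite /keyed /einv_key strip_cat; case Hm: (all isAlpha (winv m)).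
  case E: (strip w) => [|[[i|k] [|]] w'] //= /eqP [E'].
  by have := size_strip w; rewrite E E' /= size_cat ltnNge leq_addl.
have := negbT Hm; rewrite -strip_eq_nil.
case E: (strip (winv m)) => [//|[[i|k] [|]] s] _ //= /eqP [/catIs Es].
have [a Ha Ea] := strip_split (winv m).
have Em : m = winv u ++ (inr k, false) :: winv a.
  by rewrite -[m]winvK Ea E Es winv_cat winv_cons -catA.
move: reduced_um; rewrite Em; case: u {E Es Em} => [|l u'].
  by rewrite /= all_isAlpha_winv.
by rewrite -[_ ++ _]cat0s sorted_cancel.
Qed.

End KeysOfReducedProduct.

Lemma inKw_reduce g y : sorted nocancel g -> sorted nocancel y ->
  inKw g = keyed tail_key strip_key (reduce (g ++ y)) y
        || keyed Some einv_key (reduce (g ++ y)) y.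
Proof.
move=> Hg Hy; have [u [m [w [Eg -> -> _]]]] := reduce_cat Hg Hy.
rewrite Eg in Hg *; apply/idP/orP => [/keyed_of_inKw/orP // | []].
  exact: inKw_of_keyed_tail.
exact: inKw_of_keyed_einv.
Qed.

Lemma inK_fmul (g y : Finf) :
  inK g = keyed (tail_key \o val) (strip_key \o val) (fmul g y) y
       || keyed (Some \o val) (einv_key \o val) (fmul g y) y.
Proof. by rewrite /keyed /= fmul_val; apply: inKw_reduce; apply: sorted_val. Qed.

(** * Finitely supported vectors *)

Local Open Scope ring_scope.

Lemma sum_seq_pred1 (V : nmodType) (K : eqType) (ks : seq K) (k0 : K)
    (F : K -> V) : uniq ks ->
  \sum_(k <- ks) (if k0 == k then F k else 0) = if k0 \in ks then F k0 else 0.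
Proof.
move=> uks; case: ifP => k0ks.
  rewrite (bigD1_seq k0) //= eqxx big1 ?addr0 // => k /negbTE.
  by rewrite eq_sym => ->.
by rewrite big1_seq // => k /andP [_ kks]; case: eqP => // E; rewrite E kks in k0ks.
Qed.

Lemma sum_subset_uniq (V : nmodType) (T : eqType) (F : T -> V) (A B : seq T) :
  uniq A -> uniq B -> {subset A <= B} ->
  (forall g, g \in B -> g \notin A -> F g = 0) ->
  \sum_(g <- A) F g = \sum_(g <- B) F g.
Proof.
move=> uA uB sAB F0.
rewrite [RHS](bigID (mem A)) /= [X in _ + X]big1_seq ?addr0; last first.
  by move=> g /andP [nA gB]; apply: F0.
rewrite -[RHS]big_filter; apply: perm_big; apply: uniq_perm => //.
  exact: filter_uniq.
by move=> g; rewrite mem_filter; case gA: (g \in A) => //=; rewrite sAB.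
Qed.

Section FormalSums.

Variable R : realType.
Implicit Types (z : R[i]) (s : fsum R).

Lemma abs2_ge0 z : 0 <= abs2 z.
Proof. by case: z => a b /=; rewrite addr_ge0 // sqr_ge0. Qed.

Lemma abs20 : abs2 (0 : R[i]) = 0.
Proof. by rewrite /= expr0n /= addr0. Qed.

Lemma abs2D_le z z' : abs2 (z + z') <= 2 * abs2 z + 2 * abs2 z'.
Proof.
case: z z' => a b [c d] /=.
have := sqr_ge0 (a - c); have := sqr_ge0 (b - d); nra.
Qed.

Lemma coef_notin s g : g \notin map snd s -> coef s g = 0.
Proof.
move=> gs; rewrite /coef big1_seq // => p /andP [/eqP E ps].
by move: gs; rewrite -E map_f.
Qed.

Lemma norm2_on s (U : seq Finf) : uniq U -> {subset map snd s <= U} ->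
  norm2 s = \sum_(g <- U) abs2 (coef s g).
Proof.
move=> uU sU; apply: sum_subset_uniq => //.
- exact: undup_uniq.
- by move=> g; rewrite mem_undup; apply: sU.
- by move=> g _; rewrite mem_undup => /coef_notin ->; rewrite abs20.
Qed.

Lemma norm2_split_le s s1 s2 : (forall g, coef s g = coef s1 g + coef s2 g) ->
  norm2 s <= 2 * norm2 s1 + 2 * norm2 s2.
Proof.
move=> E; set U := undup (map snd s ++ map snd s1 ++ map snd s2).
have uU : uniq U := undup_uniq _.
have sU (t : fsum R) :
    {subset map snd t <= map snd s ++ map snd s1 ++ map snd s2} ->
    norm2 t = \sum_(g <- U) abs2 (coef t g).
  by move=> st; apply: norm2_on => // g /st; rewrite mem_undup.
rewrite (sU s) => [|g gs]; last by rewrite mem_cat gs.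
rewrite (sU s1) => [|g gs]; last by rewrite !mem_cat gs orbT.
rewrite (sU s2) => [|g gs]; last by rewrite !mem_cat gs !orbT.
rewrite !mulr_sumr -big_split /=; apply: ler_sum => g _; rewrite E.
exact: abs2D_le.
Qed.

Lemma coef_flatten (ss : seq (fsum R)) g :
  coef (flatten ss) g = \sum_(s <- ss) coef s g.
Proof. by rewrite /coef big_flatten. Qed.

Definition restr (P : pred Finf) s : fsum R := [seq p <- s | P p.2].

Lemma coef_restr P s g : coef (restr P s) g = if P g then coef s g else 0.
Proof.
rewrite /coef /restr big_filter_cond; case: ifP => Pg.
  by apply: eq_bigl => p /=; case: eqP => [->|]; rewrite ?Pg ?andbF.
by rewrite big1 // => p /andP [Pp /eqP E]; move: Pp; rewrite E Pg.
Qed.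

Lemma coef_mxact n (T : 'I_n -> 'I_n -> fsum R) v i g :
  coef (mxact T v i) g = \sum_(j <- enum 'I_n) \sum_(p <- T i j) \sum_(q <- v j)
     (if fmul p.2 q.2 == g then p.1 * q.1 else 0).
Proof.
rewrite /mxact coef_flatten big_map; apply: eq_bigr => j _.
by rewrite /coef /act big_mkcond big_allpairs_dep.
Qed.

Section KeyRestriction.

Variables (K : eqType) (ks : seq K).
Hypothesis uniq_ks : uniq ks.

Lemma abs2_sum_key_le (o : option K) (F : K -> R[i]) :
  abs2 (\sum_(k <- ks) (if o == Some k then F k else 0)) <=
  \sum_(k <- ks) abs2 (F k).
Proof.
have sum_ge0 : 0 <= \sum_(k <- ks) abs2 (F k).
  by apply: sumr_ge0 => k _; apply: abs2_ge0.
case: o => [k0|]; last by rewrite big1 // abs20.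
under eq_bigr do rewrite (inj_eq Some_inj).
rewrite sum_seq_pred1 //; case: ifP => [k0ks|_]; last by rewrite abs20.
by rewrite (bigD1_seq k0) //= lerDl sumr_ge0 // => k _; apply: abs2_ge0.
Qed.

Lemma sum_keys_eq (V : nmodType) (oa ob : option K) (E : V) :
  (forall k, ob = Some k -> k \in ks) ->
  \sum_(k <- ks) (if oa == Some k then (if ob == Some k then E else 0) else 0) =
  if (if oa is Some k then ob == Some k else false) then E else 0.
Proof.
move=> obks; case: oa => [k0|]; last by rewrite big1.
under eq_bigr do rewrite (inj_eq Some_inj).
rewrite sum_seq_pred1 //; case: eqP => [/obks -> // | _]; by case: (_ \in _).
Qed.

Lemma norm2_flatten_restr_le (a : Finf -> option K) (s : K -> fsum R) :
  norm2 (flatten [seq restr (fun x => a x == Some k) (s k) | k <- ks]) <=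
  \sum_(k <- ks) norm2 (s k).
Proof.
set U := undup (flatten [seq map snd (s k) | k <- ks]).
have uU : uniq U := undup_uniq _.
have sU k : k \in ks -> {subset map snd (s k) <= U}.
  move=> kks g gs; rewrite mem_undup; apply/flattenP.
  by exists (map snd (s k)) => //; apply: map_f.
rewrite (norm2_on uU); last first.
  move=> g /mapP [p /flattenP [r /mapP [k kks ->] pin] ->].
  by apply: (sU k kks); apply: map_f; move: pin; rewrite mem_filter => /andP [].
rewrite (eq_big_seq (fun k => \sum_(g <- U) abs2 (coef (s k) g))); last first.
  by move=> k kks; apply: norm2_on => //; apply: sU.
rewrite exchange_big /=; apply: ler_sum => g _.
rewrite coef_flatten big_map; under eq_bigr do rewrite coef_restr.
exact: abs2_sum_key_le.
Qed.

Lemma sum_norm2_restr_le (b : Finf -> option K) s :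
  \sum_(k <- ks) norm2 (restr (fun y => b y == Some k) s) <= norm2 s.
Proof.
set U := undup (map snd s); have uU : uniq U := undup_uniq _.
have sU (P : pred Finf) : {subset map snd (restr P s) <= U}.
  move=> g /mapP [p]; rewrite mem_filter => /andP [_ ps] ->.
  by rewrite mem_undup; apply: map_f.
rewrite [leRHS](norm2_on uU) => [|g]; last by rewrite mem_undup.
under eq_bigr do rewrite (norm2_on uU (sU _)).
rewrite exchange_big /=; apply: ler_sum => g _.
under eq_bigr do rewrite coef_restr (fun_if (@abs2 R)) abs20.
case: (b g) => [k0|]; last by rewrite big1 ?abs2_ge0.
under eq_bigr do rewrite (inj_eq Some_inj).
by rewrite sum_seq_pred1 //; case: ifP => _; rewrite ?abs2_ge0.
Qed.

End KeyRestriction.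

Section Compression.

Variables (K : eqType) (a b : Finf -> option K).
Variables (n : nat) (T : 'I_n -> 'I_n -> fsum R).

Definition input_keys (v : 'I_n -> fsum R) : seq K :=
  undup (pmap (fun q => b q.2) (flatten [seq v j | j <- enum 'I_n])).

(* [compress v] is sum_k P_{a = k} T P_{b = k} v, where P_{a = k} restricts
   to the basis vectors delta_x with a x = Some k; only the keys that b takes
   on the support of v contribute. *)
Definition compress (v : 'I_n -> fsum R) : 'I_n -> fsum R := fun i =>
  flatten [seq restr (fun x => a x == Some k)
             (mxact T (fun j => restr (fun y => b y == Some k) (v j)) i)
          | k <- input_keys v].

Lemma coef_compress v i x :
  coef (compress v i) x =
  \sum_(j <- enum 'I_n) \sum_(p <- T i j) \sum_(q <- v j)
    (if keyed a b x q.2 then (if fmul p.2 q.2 == x then p.1 * q.1 else 0)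
     else 0).
Proof.
pose F (p q : R[i] * Finf) := if fmul p.2 q.2 == x then p.1 * q.1 else 0.
rewrite /compress coef_flatten big_map.
rewrite (eq_bigr (fun k => \sum_(j <- enum 'I_n) \sum_(p <- T i j) \sum_(q <- v j)
   (if a x == Some k then (if b q.2 == Some k then F p q else 0) else 0))).
  rewrite exchange_big; apply: eq_bigr => j _; rewrite exchange_big.
  apply: eq_bigr => p _; rewrite exchange_big; apply: eq_big_seq => q qv.
  apply: sum_keys_eq; first exact: undup_uniq.
  move=> k Ek; rewrite mem_undup mem_pmap -Ek; apply: (map_f (fun q => b q.2)).
  by apply/flattenP; exists (v j) => //; apply: map_f; rewrite mem_enum.
move=> k _; rewrite coef_restr coef_mxact; case: (a x == Some k).
  by do 2 apply: eq_bigr => ? _; rewrite /restr big_filter big_mkcond.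
by rewrite big1 // => j _; rewrite big1 // => p _; rewrite big1.
Qed.

Lemma opnorm_compress c v :
  opnorm_le T c -> vnorm2 (compress v) <= c ^+ 2 * vnorm2 v.
Proof.
move=> HT; have uks : uniq (input_keys v) := undup_uniq _.
set vk := fun k j => restr (fun y => b y == Some k) (v j).
apply: (@le_trans _ _
  (\sum_(i < n) \sum_(k <- input_keys v) norm2 (mxact T (vk k) i))).
  by apply: ler_sum => i _; apply: norm2_flatten_restr_le.
rewrite exchange_big /=.
apply: (@le_trans _ _ (\sum_(k <- input_keys v) c ^+ 2 * vnorm2 (vk k))).
  by apply: ler_sum => k _; apply: HT.
rewrite -mulr_sumr ler_wpM2l ?sqr_ge0 // /vnorm2 exchange_big /=.
by apply: ler_sum => j _; apply: sum_norm2_restr_le.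
Qed.

End Compression.

End FormalSums.

Lemma inK_fmul_split (V : nmodType) (g y : Finf) (r : V) :
  (if inK g then r else 0) =
  (if keyed (tail_key \o val) (strip_key \o val) (fmul g y) y then r else 0) +
  (if keyed (Some \o val) (einv_key \o val) (fmul g y) y then r else 0).
Proof.
have : ~~ (keyed (tail_key \o val) (strip_key \o val) (fmul g y) y &&
           keyed (Some \o val) (einv_key \o val) (fmul g y) y).
  exact: keyed_disjoint.
rewrite (inK_fmul g y); do 2 case: keyed => //=; by rewrite ?addr0 ?add0r.
Qed.

Lemma coef_Qn_mxact (R : realType) n (T : 'I_n -> 'I_n -> fsum R) v i x :
  coef (mxact (Qn T) v i) x =
  coef (compress (tail_key \o val) (strip_key \o val) T v i) x +
  coef (compress (Some \o val) (einv_key \o val) T v i) x.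
Proof.
rewrite coef_mxact !coef_compress -big_split; apply: eq_bigr => j _.
rewrite -big_split /Qn /Qtr big_filter big_mkcond; apply: eq_bigr => p _.
rewrite -big_split /=.
transitivity (\sum_(q <- v j)
    if inK p.2 then (if fmul p.2 q.2 == x then p.1 * q.1 else 0) else 0).
  by case: ifP => // _; rewrite big1.
apply: eq_bigr => q _; case: eqP => [<-|_]; last by rewrite !if_same addr0.
exact: inK_fmul_split.
Qed.

Theorem proposition4 (R : realType) (n : nat) (T : 'I_n -> 'I_n -> fsum R)
  (c : R) :
  0 <= c -> opnorm_le T c -> opnorm_le (Qn T) (2 * c).
Proof.
move=> _ HT v.
have le_W1 := opnorm_compress (tail_key \o val) (strip_key \o val) v HT.
have le_W2 := opnorm_compress (Some \o val) (einv_key \o val) v HT.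
set W1 := compress _ _ T v in le_W1; set W2 := compress _ _ T v in le_W2.
have le_W : vnorm2 (mxact (Qn T) v) <= 2 * vnorm2 W1 + 2 * vnorm2 W2.
  rewrite /vnorm2 !mulr_sumr -big_split; apply: ler_sum => i _.
  by apply: norm2_split_le => x; apply: coef_Qn_mxact.
have -> : (2 * c) ^+ 2 * vnorm2 v = 4 * (c ^+ 2 * vnorm2 v) by ring.
lra.
Qed.
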